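(* If a segment $s_i$ contains a reflection point $p_j$ of $\mathrm{OPT}$, then $s_i$ has no other intersection with $\mathrm{OPT}$; in particular no other point $p_{j'}$ of $\mathrm{OPT}$ lies on $s_i$.
   Context: Instance: vertical line segments $s_1,\dots,s_n$ in $\mathbb{R}^2$, each of length $1$, with pairwise distinct $x$-coordinates. A tour is a cyclic sequence of points $p_1,\dots,p_\sigma$, each on some segment, with every segment containing at least one $p_j$; the straight segments joining consecutive points are legs; cost is total length. $\mathrm{OPT}$ is a fixed minimum-cost tour, oriented, with no two consecutive points on the same segment and not self-crossing. A point $p_j$ of $\mathrm{OPT}$ on segment $s$ is a reflection point if both incident legs lie in the half-plane $x\le x(s)$ or both lie in $x\ge x(s)$. *)

From Stdlib Require Import Reals Lra Lia.
Open Scope R_scope.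

Definition pt := (R * R)%type.

(* Instance: segment s_i (for i < n) is {(xs i, t) | ys i <= t <= ys i + 1}
   (vertical, length 1); xs i is its x-coordinate, ys i its lower endpoint. *)
Definition on_seg (xs ys : nat -> R) (i : nat) (q : pt) : Prop :=
  fst q = xs i /\ ys i <= snd q <= ys i + 1.

Definition dist (a b : pt) : R :=
  sqrt ((fst a - fst b) ^ 2 + (snd a - snd b) ^ 2).

Definition nxt (sigma j : nat) : nat := Nat.modulo (S j) sigma.
Definition prv (sigma j : nat) : nat := Nat.modulo (j + sigma - 1) sigma.

Fixpoint sumR (k : nat) (f : nat -> R) : R :=
  match k with O => 0 | S k' => sumR k' f + f k' end.

Definition cost (sigma : nat) (p : nat -> pt) : R :=
  sumR sigma (fun j => dist (p j) (p (nxt sigma j))).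

Definition is_tour (n : nat) (xs ys : nat -> R) (sigma : nat) (p : nat -> pt) : Prop :=
  (0 < sigma)%nat /\
  (forall j, (j < sigma)%nat -> exists i, (i < n)%nat /\ on_seg xs ys i (p j)) /\
  (forall i, (i < n)%nat -> exists j, (j < sigma)%nat /\ on_seg xs ys i (p j)).

Definition on_leg (a b z : pt) : Prop :=
  exists t, 0 <= t <= 1 /\
    z = (fst a + t * (fst b - fst a), snd a + t * (snd b - snd a)).

Definition orient (a b c : pt) : R :=
  (fst b - fst a) * (snd c - snd a) - (snd b - snd a) * (fst c - fst a).

Definition crosses (a b c d : pt) : Prop :=
  orient a b c * orient a b d < 0 /\ orient c d a * orient c d b < 0.

Definition non_self_crossing (sigma : nat) (p : nat -> pt) : Prop :=
  forall j k, (j < sigma)%nat -> (k < sigma)%nat ->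
    ~ crosses (p j) (p (nxt sigma j)) (p k) (p (nxt sigma k)).

Definition no_consecutive_same_segment (n : nat) (xs ys : nat -> R)
    (sigma : nat) (p : nat -> pt) : Prop :=
  forall j i, (j < sigma)%nat -> (i < n)%nat ->
    on_seg xs ys i (p j) -> ~ on_seg xs ys i (p (nxt sigma j)).

Definition leg_le (a b : pt) (c : R) : Prop := fst a <= c /\ fst b <= c.
Definition leg_ge (a b : pt) (c : R) : Prop := c <= fst a /\ c <= fst b.

Definition reflection_point (xs : nat -> R) (i : nat) (sigma : nat)
    (p : nat -> pt) (j : nat) : Prop :=
  (leg_le (p (prv sigma j)) (p j) (xs i) /\ leg_le (p j) (p (nxt sigma j)) (xs i)) \/
  (leg_ge (p (prv sigma j)) (p j) (xs i) /\ leg_ge (p j) (p (nxt sigma j)) (xs i)).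

(* If p_j is a reflection point on s_i, its neighbours p_{j-1} and p_{j+1} lie strictly on
   the same side of the line x = x(s_i) (they are on other segments, whose x-coordinates
   differ), so the shortcut p_{j-1} -> p_{j+1} is strictly shorter than the detour through
   p_j.  If some other leg met s_i at a point z, inserting z into that leg (which costs
   nothing) and shortcutting p_j would give a strictly cheaper tour that still visits s_i,
   contradicting optimality.  The two legs at p_j meet the line x = x(s_i) only in p_j. *)

From Stdlib Require Import Reals Lra Lia.
Open Scope R_scope.

Lemma nxt_cases s m : (m < s)%nat ->
  ((S m < s)%nat /\ nxt s m = S m) \/ (S m = s /\ nxt s m = 0%nat).
Proof.
  intros Hm; unfold nxt.
  destruct (Nat.eq_dec (S m) s) as [<- | Hne].
  - right; split; [reflexivity | apply Nat.Div0.mod_same].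
  - left; split; [lia | apply Nat.mod_small; lia].
Qed.

Lemma prv_cases s m : (m < s)%nat ->
  (m = 0%nat /\ prv s m = (s - 1)%nat) \/ ((0 < m)%nat /\ prv s m = (m - 1)%nat).
Proof.
  intros Hm; unfold prv.
  destruct m as [| m].
  - left; split; [reflexivity | apply Nat.mod_small; lia].
  - right; split; [lia |].
    replace (S m + s - 1)%nat with (m + 1 * s)%nat by lia.
    rewrite Nat.Div0.mod_add, Nat.mod_small; lia.
Qed.

Lemma nxt_lt s m : (m < s)%nat -> (nxt s m < s)%nat.
Proof. intros Hm; destruct (nxt_cases s m Hm) as [[? ?] | [? ?]]; lia. Qed.

Lemma prv_lt s m : (m < s)%nat -> (prv s m < s)%nat.
Proof. intros Hm; destruct (prv_cases s m Hm) as [[? ?] | [? ?]]; lia. Qed.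

Lemma nxt_prv s m : (m < s)%nat -> nxt s (prv s m) = m.
Proof.
  intros Hm; pose proof (prv_lt s m Hm) as Hp.
  destruct (prv_cases s m Hm) as [[? E] | [? E]]; rewrite E in *;
    destruct (nxt_cases s _ Hp) as [[? ?] | [? ?]]; lia.
Qed.

Lemma nxt_inj s m m' : (m < s)%nat -> (m' < s)%nat -> nxt s m = nxt s m' -> m = m'.
Proof.
  intros Hm Hm'.
  destruct (nxt_cases s m Hm) as [[? ?] | [? ?]];
    destruct (nxt_cases s m' Hm') as [[? ?] | [? ?]]; lia.
Qed.

Lemma dist_self a : dist a a = 0.
Proof.
  unfold dist.
  replace ((fst a - fst a) ^ 2 + (snd a - snd a) ^ 2) with 0 by ring.
  apply sqrt_0.
Qed.

Lemma sqrt_sum_sq_lt ux uy vx vy : ux * vx < 0 ->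
  sqrt ((ux + vx) ^ 2 + (uy + vy) ^ 2) < sqrt (ux ^ 2 + uy ^ 2) + sqrt (vx ^ 2 + vy ^ 2).
Proof.
  intros Hx.
  set (A := ux ^ 2 + uy ^ 2); set (B := vx ^ 2 + vy ^ 2).
  assert (HA : 0 <= A) by (unfold A; nra).
  assert (HB : 0 <= B) by (unfold B; nra).
  pose proof (sqrt_pos A); pose proof (sqrt_pos B).
  assert (Hcs : uy * vy <= sqrt A * sqrt B).
  { destruct (Rle_or_lt (uy * vy) 0) as [Hneg | Hpos]; [nra |].
    rewrite <- sqrt_mult, <- (sqrt_pow2 (uy * vy)) by lra.
    apply sqrt_le_1_alt; unfold A, B; nra. }
  rewrite <- (sqrt_pow2 (sqrt A + sqrt B)) by lra.
  apply sqrt_lt_1_alt; split.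
  - pose proof (pow2_ge_0 (ux + vx)); pose proof (pow2_ge_0 (uy + vy)); lra.
  - replace ((sqrt A + sqrt B) ^ 2) with (sqrt A ^ 2 + sqrt B ^ 2 + 2 * (sqrt A * sqrt B))
      by ring.
    rewrite !pow2_sqrt by assumption.
    assert (E : (ux + vx) ^ 2 + (uy + vy) ^ 2 = A + B + 2 * (ux * vx + uy * vy))
      by (unfold A, B; ring).
    lra.
Qed.

Lemma dist_lt_detour (a b c : pt) :
  (fst b < fst a /\ fst c < fst a) \/ (fst a < fst b /\ fst a < fst c) ->
  dist b c < dist b a + dist a c.
Proof.
  intros Hside; unfold dist.
  replace (fst b - fst c) with ((fst b - fst a) + (fst a - fst c)) by ring.
  replace (snd b - snd c) with ((snd b - snd a) + (snd a - snd c)) by ring.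
  apply sqrt_sum_sq_lt.
  destruct Hside; nra.
Qed.

Lemma on_leg_dist a b z : on_leg a b z -> dist a z + dist z b = dist a b.
Proof.
  intros [t [Ht ->]]; unfold dist; cbn [fst snd].
  set (D := (fst a - fst b) ^ 2 + (snd a - snd b) ^ 2).
  assert (HD : 0 <= D)
    by (unfold D; pose proof (pow2_ge_0 (fst a - fst b));
        pose proof (pow2_ge_0 (snd a - snd b)); lra).
  replace ((fst a - (fst a + t * (fst b - fst a))) ^ 2
           + (snd a - (snd a + t * (snd b - snd a))) ^ 2)
    with (t ^ 2 * D) by (unfold D; ring).
  replace ((fst a + t * (fst b - fst a) - fst b) ^ 2
           + (snd a + t * (snd b - snd a) - snd b) ^ 2)
    with ((1 - t) ^ 2 * D) by (unfold D; ring).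
  rewrite !sqrt_mult, !sqrt_pow2 by (lra || apply pow2_ge_0).
  ring.
Qed.

Lemma on_leg_start a b : on_leg a b a.
Proof. exists 0; split; [lra |]; destruct a; cbn; f_equal; ring. Qed.

Lemma on_leg_sym a b z : on_leg a b z -> on_leg b a z.
Proof.
  intros [t [Ht ->]]; exists (1 - t); split; [lra |].
  f_equal; ring.
Qed.

Lemma on_leg_same_x a b z : on_leg a b z -> fst z = fst a -> fst b <> fst a -> z = a.
Proof.
  intros [t [Ht ->]] Hz Hb; cbn in Hz.
  assert (t = 0) as ->.
  { assert (Hprod : t * (fst b - fst a) = 0) by lra.
    destruct (Rmult_integral _ _ Hprod); [assumption | lra]. }
  destruct a; cbn; f_equal; ring.
Qed.

Lemma sumR_ext k f g : (forall m, (m < k)%nat -> f m = g m) -> sumR k f = sumR k g.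
Proof.
  induction k as [| k IH]; intros Hfg; cbn; [reflexivity |].
  rewrite IH, Hfg; [reflexivity | lia | intros m Hm; apply Hfg; lia].
Qed.

Lemma sumR_plus k f g : sumR k (fun m => f m + g m) = sumR k f + sumR k g.
Proof. induction k as [| k IH]; cbn; [ring | rewrite IH; ring]. Qed.

Lemma sumR_split a b f : sumR (a + b) f = sumR a f + sumR b (fun m => f (a + m)%nat).
Proof.
  induction b as [| b IH]; cbn.
  - rewrite Nat.add_0_r; ring.
  - rewrite Nat.add_succ_r; cbn; rewrite IH; ring.
Qed.

Lemma sumR_zero k h : (forall m, (m < k)%nat -> h m = 0) -> sumR k h = 0.
Proof.
  intros Hh; rewrite (sumR_ext k h (fun _ => 0)) by assumption; clear Hh.
  induction k as [| k IH]; cbn; [reflexivity | rewrite IH; ring].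
Qed.

Lemma sumR_single k h a : (a < k)%nat ->
  (forall m, (m < k)%nat -> m <> a -> h m = 0) -> sumR k h = h a.
Proof.
  induction k as [| k IH]; intros Ha Hh; [lia |]; cbn.
  destruct (Nat.eq_dec k a) as [<- | Hne].
  - rewrite sumR_zero by (intros m Hm; apply Hh; lia); ring.
  - rewrite IH, (Hh k) by (lia || intros m Hm Hma; apply Hh; lia); ring.
Qed.

Lemma sumR_two k h a b : (a < k)%nat -> (b < k)%nat -> a <> b ->
  (forall m, (m < k)%nat -> m <> a -> m <> b -> h m = 0) -> sumR k h = h a + h b.
Proof.
  intros Ha Hb Hab Hh.
  set (ha := fun m => if Nat.eq_dec m a then h m else 0).
  set (hb := fun m => if Nat.eq_dec m a then 0 else h m).
  rewrite (sumR_ext k h (fun m => ha m + hb m))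
    by (intros m _; unfold ha, hb; destruct (Nat.eq_dec m a); ring).
  rewrite sumR_plus, (sumR_single k ha a), (sumR_single k hb b); unfold ha, hb.
  - destruct (Nat.eq_dec a a); [| contradiction].
    destruct (Nat.eq_dec b a); [congruence | reflexivity].
  - assumption.
  - intros m Hm Hmb; destruct (Nat.eq_dec m a); [reflexivity | apply Hh; assumption].
  - assumption.
  - intros m _ Hma; destruct (Nat.eq_dec m a); easy.
Qed.

(* p_a is skipped by duplicating its predecessor, so the tour keeps its length s. *)
Definition shortcut (s : nat) (r : nat -> pt) (a : nat) : nat -> pt :=
  fun m => if Nat.eq_dec m a then r (prv s a) else r m.

Lemma cost_shortcut s r a : (a < s)%nat -> nxt s a <> a ->
  cost s (shortcut s r a) + dist (r (prv s a)) (r a) + dist (r a) (r (nxt s a))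
  = cost s r + dist (r (prv s a)) (r (nxt s a)).
Proof.
  intros Ha Hna.
  set (b := prv s a).
  assert (Hb : (b < s)%nat) by (apply prv_lt; assumption).
  assert (Hnb : nxt s b = a) by (apply nxt_prv; assumption).
  assert (Hba : b <> a) by (intros E; rewrite E in Hnb; contradiction).
  set (f := fun m => dist (r m) (r (nxt s m))).
  set (g := fun m => dist (shortcut s r a m) (shortcut s r a (nxt s m))).
  assert (Hfar : forall m, (m < s)%nat -> m <> a -> m <> b -> g m - f m = 0).
  { intros m Hm Hma Hmb; unfold f, g, shortcut.
    destruct (Nat.eq_dec m a); [contradiction |].
    destruct (Nat.eq_dec (nxt s m) a) as [E | _]; [| ring].
    rewrite <- Hnb in E; apply nxt_inj in E; [contradiction | assumption | assumption]. }
  assert (Hcost : cost s (shortcut s r a) = cost s r + (g a - f a) + (g b - f b)).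
  { unfold cost; fold f g.
    rewrite (sumR_ext s g (fun m => f m + (g m - f m))) by (intros; ring).
    rewrite sumR_plus, (sumR_two s _ a b Ha Hb (not_eq_sym Hba) Hfar); ring. }
  rewrite Hcost; unfold f, g, shortcut; rewrite Hnb; fold b.
  destruct (Nat.eq_dec a a); [| contradiction].
  destruct (Nat.eq_dec (nxt s a) a); [contradiction |].
  destruct (Nat.eq_dec b a); [contradiction |].
  rewrite dist_self; ring.
Qed.

Definition insert_after (r : nat -> pt) (k : nat) (z : pt) : nat -> pt :=
  fun m => match Nat.compare m (S k) with
           | Lt => r m
           | Eq => z
           | Gt => r (m - 1)%nat
           end.

Lemma insert_after_le r k z m : (m <= k)%nat -> insert_after r k z m = r m.
Proof.
  intros Hm; unfold insert_after.
  replace (Nat.compare m (S k)) with Lt by (symmetry; apply Nat.compare_lt_iff; lia).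
  reflexivity.
Qed.

Lemma insert_after_new r k z : insert_after r k z (S k) = z.
Proof. unfold insert_after; rewrite Nat.compare_refl; reflexivity. Qed.

Lemma insert_after_gt r k z m : (S k < m)%nat -> insert_after r k z m = r (m - 1)%nat.
Proof.
  intros Hm; unfold insert_after.
  replace (Nat.compare m (S k)) with Gt by (symmetry; apply Nat.compare_gt_iff; lia).
  reflexivity.
Qed.

Lemma insert_after_image s r k z m : (k < s)%nat -> (m < S s)%nat ->
  insert_after r k z m = z \/
  exists m', (m' < s)%nat /\ insert_after r k z m = r m'.
Proof.
  intros Hk Hm.
  destruct (Nat.lt_trichotomy m (S k)) as [Hlt | [-> | Hgt]].
  - right; exists m; split; [lia | apply insert_after_le; lia].
  - left; apply insert_after_new.
  - right; exists (m - 1)%nat; split; [lia | apply insert_after_gt; assumption].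
Qed.

Lemma insert_after_preimage s r k z m : (m < s)%nat ->
  exists m', (m' < S s)%nat /\ insert_after r k z m' = r m.
Proof.
  intros Hm; destruct (Nat.le_gt_cases m k) as [Hle | Hgt].
  - exists m; split; [lia | apply insert_after_le; assumption].
  - exists (S m); split; [lia |].
    rewrite insert_after_gt by lia; f_equal; lia.
Qed.

Lemma cost_insert_after s r k z : (k < s)%nat -> on_leg (r k) (r (nxt s k)) z ->
  cost (S s) (insert_after r k z) = cost s r.
Proof.
  intros Hk Hz; unfold cost.
  set (F := fun m => dist (r m) (r (nxt s m))).
  set (G := fun m => dist (insert_after r k z m) (insert_after r k z (nxt (S s) m))).
  replace (sumR s F) with (sumR (S k + (s - S k)) F) by (f_equal; lia).
  replace (sumR (S s) G) with (sumR (S k + (1 + (s - S k))) G) by (f_equal; lia).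
  rewrite !sumR_split; cbn [sumR].
  assert (Hbefore : sumR k G = sumR k F).
  { apply sumR_ext; intros m Hm; unfold F, G.
    destruct (nxt_cases (S s) m ltac:(lia)) as [[_ ->] | [? _]]; [| lia].
    destruct (nxt_cases s m ltac:(lia)) as [[_ ->] | [? _]]; [| lia].
    rewrite !insert_after_le by lia; reflexivity. }
  assert (Hafter : sumR (s - S k) (fun m => G (S k + (1 + m))%nat)
                   = sumR (s - S k) (fun m => F (S k + m)%nat)).
  { apply sumR_ext; intros m Hm; unfold F, G.
    rewrite insert_after_gt by lia.
    replace (S k + (1 + m) - 1)%nat with (S k + m)%nat by lia.
    destruct (nxt_cases (S s) (S k + (1 + m)) ltac:(lia)) as [[? ->] | [? ->]];
      destruct (nxt_cases s (S k + m) ltac:(lia)) as [[? ->] | [? ->]]; try lia.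
    - rewrite insert_after_gt by lia; do 2 f_equal; lia.
    - rewrite insert_after_le by lia; reflexivity. }
  assert (Hnew : G k + G (S k + 0)%nat = F k).
  { unfold F, G; rewrite Nat.add_0_r, <- (on_leg_dist _ _ _ Hz).
    destruct (nxt_cases (S s) k ltac:(lia)) as [[_ ->] | [? _]]; [| lia].
    rewrite insert_after_le, insert_after_new by lia.
    destruct (nxt_cases (S s) (S k) ltac:(lia)) as [[? ->] | [? ->]];
      destruct (nxt_cases s k Hk) as [[? ->] | [? ->]]; try lia.
    - rewrite insert_after_gt by lia; do 3 f_equal; lia.
    - rewrite insert_after_le by lia; reflexivity. }
  rewrite Hbefore, Hafter, <- Hnew; ring.
Qed.

(* z takes over the only job of p_a, visiting segment i. *)
Lemma is_tour_shortcut_insert n xs ys s r a k z i :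
  is_tour n xs ys s r -> (a < s)%nat -> (k < s)%nat -> (i < n)%nat ->
  on_seg xs ys i z ->
  (forall i', (i' < n)%nat -> on_seg xs ys i' (r a) -> i' = i) ->
  is_tour n xs ys (S s) (insert_after (shortcut s r a) k z).
Proof.
  intros [_ [Hpts Hcov]] Ha Hk Hi Hz Honly.
  split; [lia | split].
  - intros m Hm.
    destruct (insert_after_image s (shortcut s r a) k z m Hk Hm) as [-> | [m' [Hm' ->]]].
    + exists i; split; assumption.
    + unfold shortcut; destruct (Nat.eq_dec m' a); apply Hpts; [apply prv_lt |]; assumption.
  - intros i' Hi'.
    destruct (Nat.eq_dec i' i) as [-> | Hne].
    + exists (S k); split; [lia | rewrite insert_after_new; assumption].
    + destruct (Hcov i' Hi') as [m [Hm Hs]].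
      assert (Hma : m <> a) by (intros ->; apply Hne, Honly; assumption).
      destruct (insert_after_preimage s (shortcut s r a) k z m Hm) as [m' [Hm' E]].
      exists m'; split; [assumption |].
      rewrite E; unfold shortcut; destruct (Nat.eq_dec m a); [contradiction | assumption].
Qed.

Section ReflectionPoint.

Variables (n : nat) (xs ys : nat -> R) (sigma : nat) (p : nat -> pt) (i j : nat).

Hypothesis Hdistinct :
  forall i i', (i < n)%nat -> (i' < n)%nat -> i <> i' -> xs i <> xs i'.
Hypothesis Htour : is_tour n xs ys sigma p.
Hypothesis Hopt : forall sigma' q, is_tour n xs ys sigma' q -> cost sigma p <= cost sigma' q.
Hypothesis Hcons : no_consecutive_same_segment n xs ys sigma p.
Hypotheses (Hi : (i < n)%nat) (Hj : (j < sigma)%nat) (Hon : on_seg xs ys i (p j)).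
Hypothesis Hrefl : reflection_point xs i sigma p j.

Lemma seg_index_of_x i' q : (i' < n)%nat -> on_seg xs ys i' q -> fst q = xs i -> i' = i.
Proof.
  intros Hi' [Hx _] Hq.
  destruct (Nat.eq_dec i' i) as [| Hne]; [assumption |].
  exfalso; apply (Hdistinct i' i Hi' Hi Hne); congruence.
Qed.

Lemma x_ne_off_seg m : (m < sigma)%nat -> ~ on_seg xs ys i (p m) -> fst (p m) <> xs i.
Proof.
  intros Hm Hoff Hx.
  destruct Htour as [_ [Hpts _]].
  destruct (Hpts m Hm) as [i' [Hi' Hs]].
  apply Hoff; rewrite <- (seg_index_of_x i' (p m)); assumption.
Qed.

Lemma nxt_ne : nxt sigma j <> j.
Proof. intros E; apply (Hcons j i Hj Hi Hon); rewrite E; assumption. Qed.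

Lemma prv_off_seg : ~ on_seg xs ys i (p (prv sigma j)).
Proof.
  intros Hs; apply (Hcons (prv sigma j) i (prv_lt _ _ Hj) Hi Hs).
  rewrite nxt_prv; assumption.
Qed.

Lemma nxt_off_seg : ~ on_seg xs ys i (p (nxt sigma j)).
Proof. apply Hcons; assumption. Qed.

Lemma neighbours_strictly_one_side :
  (fst (p (prv sigma j)) < fst (p j) /\ fst (p (nxt sigma j)) < fst (p j)) \/
  (fst (p j) < fst (p (prv sigma j)) /\ fst (p j) < fst (p (nxt sigma j))).
Proof.
  pose proof (x_ne_off_seg _ (prv_lt _ _ Hj) prv_off_seg) as Hb.
  pose proof (x_ne_off_seg _ (nxt_lt _ _ Hj) nxt_off_seg) as Hc.
  apply Rdichotomy in Hb, Hc.
  destruct Hon as [Hx _]; rewrite Hx.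
  unfold reflection_point, leg_le, leg_ge in Hrefl.
  destruct Hrefl as [[[Hb' _] [_ Hc']] | [[Hb' _] [_ Hc']]]; [left | right]; lra.
Qed.

Lemma cost_shortcut_lt : cost sigma (shortcut sigma p j) < cost sigma p.
Proof.
  pose proof (cost_shortcut sigma p j Hj nxt_ne).
  pose proof (dist_lt_detour _ _ _ neighbours_strictly_one_side).
  lra.
Qed.

Lemma other_legs_avoid_seg k z : (k < sigma)%nat -> k <> j -> k <> prv sigma j ->
  on_leg (p k) (p (nxt sigma k)) z -> ~ on_seg xs ys i z.
Proof.
  intros Hk Hkj Hkb Hz Hzs.
  set (q := shortcut sigma p j).
  assert (Hqk : q k = p k)
    by (unfold q, shortcut; destruct (Nat.eq_dec k j); [contradiction | reflexivity]).
  assert (Hqnk : q (nxt sigma k) = p (nxt sigma k)).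
  { unfold q, shortcut; destruct (Nat.eq_dec (nxt sigma k) j) as [E | _]; [| reflexivity].
    exfalso; apply Hkb, (nxt_inj sigma); [| apply prv_lt |]; try assumption.
    rewrite nxt_prv; assumption. }
  rewrite <- Hqk, <- Hqnk in Hz.
  assert (Htour' : is_tour n xs ys (S sigma) (insert_after q k z)).
  { apply is_tour_shortcut_insert with i; try assumption.
    intros i' Hi' Hs; apply (seg_index_of_x i' (p j)); [assumption | assumption |].
    destruct Hon; assumption. }
  pose proof (Hopt _ _ Htour') as Hle.
  rewrite cost_insert_after in Hle by assumption.
  pose proof cost_shortcut_lt as Hlt; fold q in Hlt; lra.
Qed.

End ReflectionPoint.

Theorem lemma7 (n : nat) (xs ys : nat -> R)
  (Hdistinct : forall i i', (i < n)%nat -> (i' < n)%nat -> i <> i' -> xs i <> xs i')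
  (sigma : nat) (p : nat -> pt)
  (Htour : is_tour n xs ys sigma p)
  (Hopt : forall sigma' q, is_tour n xs ys sigma' q -> cost sigma p <= cost sigma' q)
  (Hcons : no_consecutive_same_segment n xs ys sigma p)
  (Hcross : non_self_crossing sigma p)
  (i j : nat) (Hi : (i < n)%nat) (Hj : (j < sigma)%nat)
  (Hon : on_seg xs ys i (p j))
  (Hrefl : reflection_point xs i sigma p j) :
  (forall k z, (k < sigma)%nat -> on_leg (p k) (p (nxt sigma k)) z ->
      on_seg xs ys i z -> z = p j) /\
  (forall j', (j' < sigma)%nat -> j' <> j -> ~ on_seg xs ys i (p j')).
Proof.
  (* The exchange argument needs only optimality. *)
  pose proof (x_ne_off_seg n xs ys sigma p i Hdistinct Htour Hi) as Hx_ne.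
  pose proof (other_legs_avoid_seg n xs ys sigma p i j Hdistinct Htour Hopt Hcons Hi Hj Hon Hrefl)
    as Havoid.
  assert (Hxj : fst (p j) = xs i) by apply Hon.
  split.
  - intros k z Hk Hz Hzs.
    assert (Hxz : fst z = xs i) by apply Hzs.
    destruct (Nat.eq_dec k j) as [-> | Hkj].
    + apply (on_leg_same_x _ _ _ Hz); [congruence |].
      rewrite Hxj; apply Hx_ne; [apply nxt_lt | apply nxt_off_seg with n]; assumption.
    + destruct (Nat.eq_dec k (prv sigma j)) as [-> | Hkb].
      * rewrite nxt_prv in Hz by assumption.
        apply (on_leg_same_x _ _ _ (on_leg_sym _ _ _ Hz)); [congruence |].
        rewrite Hxj; apply Hx_ne; [apply prv_lt | apply prv_off_seg with n]; assumption.
      * exfalso; apply (Havoid k z); assumption.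
  - intros j' Hj' Hj'j Hs.
    destruct (Nat.eq_dec j' (prv sigma j)) as [-> | Hj'b].
    + apply (prv_off_seg n xs ys sigma p i j); assumption.
    + apply (Havoid j' (p j')); try assumption.
      apply on_leg_start.
Qed.
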